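(* Let $k\ge 0$ and let $H$ be a digraph that has a complete set of obstructions consisting of oriented trees of algebraic height at most $k$. Then the arc graph $\delta H$ has a complete set of obstructions consisting of oriented trees of algebraic height at most $k+1$.
   Context: Digraphs are finite; homomorphisms are arc-preserving vertex maps. A set $\mathcal F$ of digraphs is a complete set of obstructions for $H$ if for every digraph $G$: $G\to H$ iff no $F\in\mathcal F$ admits a homomorphism to $G$. An oriented tree is a digraph whose underlying undirected graph is a tree. The algebraic height of an oriented tree $T$ is the minimum number of arcs of a directed path to which $T$ maps homomorphically. The arc graph of $G=(V,A)$ is $\delta G=(A,\delta A)$ with $\delta A=\{((u,v),(v,w)) : (u,v),(v,w)\in A\}$. *)

From mathcomp Require Import all_boot.
Set Implicit Arguments. Unset Strict Implicit. Unset Printing Implicit Defensive.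

Record digraph := Digraph { dvert : finType; darc : rel dvert }.

Definition hom (G H : digraph) : Prop :=
  exists f : dvert G -> dvert H,
    forall u v, darc u v -> darc (f u) (f v).

Definition obstruction_set (F : digraph -> Prop) (H : digraph) : Prop :=
  forall G : digraph, hom G H <-> ~ (exists T, F T /\ hom T G).

Definition uadj (G : digraph) : rel (dvert G) :=
  fun u v => darc u v || darc v u.

(* Oriented tree: no loops, no pair of opposite arcs (so the underlying
   graph is simple), nonempty, and the underlying graph is connected and
   contains no cycle (a cycle = a duplicate-free closed walk with >= 3 vertices). *)
Definition oriented_tree (T : digraph) : Prop :=
  [/\ (forall u : dvert T, ~~ darc u u),
      (forall u v : dvert T, ~~ (darc u v && darc v u)),
      (0 < #|dvert T|)%N,
      (forall u v : dvert T, connect (@uadj T) u v) &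
      (forall c : seq (dvert T), (3 <= size c)%N -> ~~ ucycleb (@uadj T) c)].

Definition dipath (n : nat) : digraph :=
  @Digraph 'I_n.+1 (fun i j => (nat_of_ord i).+1 == nat_of_ord j).

(* Algebraic height at most k: the minimal n with T -> dipath n is <= k,
   i.e. T maps to a directed path with at most k arcs. *)
Definition alg_height_le (T : digraph) (k : nat) : Prop :=
  exists n, (n <= k)%N /\ hom T (dipath n).

Definition arc_graph (G : digraph) : digraph :=
  @Digraph {p : dvert G * dvert G | darc p.1 p.2}
    (fun a b => (val a).2 == (val b).1).

From mathcomp Require Import all_boot.
From Stdlib Require Import Classical.
Set Implicit Arguments. Unset Strict Implicit. Unset Printing Implicit Defensive.

(* The arc graph functor delta has a left adjoint: a digraph G is replaced by
   the digraph whose vertices are the two ends (tail end (v,false) and head end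
   (v,true)) of the vertices v of G, where an arc u -> v of G glues the head end
   of u to the tail end of v, and whose arcs go from the tail end to the head
   end of each v (up to gluing).

   Given G with no homomorphism to delta H, the adjoint of G does not map to H,
   so some obstruction tree T of algebraic height <= k maps to it.  We "unfold"
   T into an oriented tree S mapping to G: walking through T from a root, each
   arc of T is realised by a zigzag path of G, glued onto S leaf by leaf
   ([ltree_realize]); the levels of T give levels of S, so S has algebraic
   height <= k+1 ([tree_unfolding]).  Since S -> delta H would give T -> H,
   S does not map to delta H.  Hence the oriented trees of height <= k+1 not
   mapping to delta H form a complete set of obstructions for delta H. *)

Definition homf (G H : digraph) (f : dvert G -> dvert H) : Prop :=
  forall u v, darc u v -> darc (f u) (f v).

Lemma hom_trans (A B C : digraph) : hom A B -> hom B C -> hom A C.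
Proof. by move=> [f hf] [f' hf']; exists (fun a => f' (f a)) => u v /hf /hf'. Qed.

Lemma hom_dipathP (T : digraph) (n : nat) :
  hom T (dipath n) <->
  exists h : dvert T -> nat,
    (forall a b, darc a b -> h b = (h a).+1) /\ (forall a, h a <= n).
Proof.
split=> [[f hf]|[h [hS hle]]].
  exists (fun a => nat_of_ord (f a)); split=> [a b /hf /eqP //|a].
  by rewrite -ltnS ltn_ord.
exists (fun a => (inord (h a) : 'I_n.+1)) => a b /hS /= hab.
by rewrite !inordK ?ltnS // hab.
Qed.

Lemma connect_homo (A B : finType) (f : A -> B) (e : rel A) (e' : rel B) :
  (forall x y, e x y -> e' (f x) (f y)) ->
  forall x y, connect e x y -> connect e' (f x) (f y).
Proof.
move=> he x _ /connectP[p ep ->]; elim: p x ep => [|z p IH] x /=.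
  by move=> _; apply: connect0.
case/andP=> /he exz /IH; exact/connect_trans/connect1.
Qed.

Lemma connect_inv (A : finType) (B : Type) (f : A -> B) (e : rel A) :
  (forall x y, e x y -> f x = f y) ->
  forall x y, connect e x y -> f x = f y.
Proof.
move=> he x _ /connectP[p ep ->]; elim: p x ep => [|z p IH] x //=.
by case/andP=> /he -> /IH.
Qed.

Lemma uadj_sym (G : digraph) : symmetric (@uadj G).
Proof. by move=> x y; rewrite /uadj orbC. Qed.

Definition glue (G : digraph) : rel (dvert G * bool) := fun p q =>
  match p.2, q.2 with
  | true, false => darc p.1 q.1
  | false, true => darc q.1 p.1
  | _, _ => false end.

Lemma glue_sym (G : digraph) : symmetric (@glue G).
Proof. by move=> [a [|]] [b [|]]. Qed.

Lemma glue_homo (S S' : digraph) (f : dvert S -> dvert S') : homf f ->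
  forall p q, connect (@glue S) p q ->
  connect (@glue S') (f p.1, p.2) (f q.1, q.2).
Proof.
move=> hf; apply: (connect_homo (f := fun p => (f p.1, p.2))).
by move=> [a [|]] [b [|]] //= /hf.
Qed.

Lemma glue_level (S : digraph) (L : dvert S -> nat) :
  (forall s t, darc s t -> L t = (L s).+1) ->
  forall p q, connect (@glue S) p q -> L p.1 + p.2 = L q.1 + q.2.
Proof.
move=> hL; apply: (connect_inv (f := fun p : dvert S * bool => L p.1 + p.2)).
by move=> [a [|]] [b [|]] //= /hL ->; rewrite addn0 addn1.
Qed.

Definition linked (G : digraph) (p q : dvert G * bool) : bool :=
  [exists v, connect (@glue G) p (v, false) && connect (@glue G) q (v, true)].

Lemma linked_homo (S S' : digraph) (f : dvert S -> dvert S') p q : homf f ->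
  linked p q -> linked (f p.1, p.2) (f q.1, q.2).
Proof.
move=> hf /existsP[s /andP[ps qs]]; apply/existsP; exists (f s).
by rewrite (glue_homo hf ps) (glue_homo hf qs).
Qed.

(* The left adjoint of the arc graph functor (before quotienting by gluing). *)
Definition delta_adj (G : digraph) : digraph :=
  @Digraph (dvert G * bool)%type (@linked G).

Lemma hom_delta_adj (G H : digraph) : hom (delta_adj G) H -> hom G (arc_graph H).
Proof.
case=> phi hphi; have glue_cs := sym_connect_sym (@glue_sym G).
pose cls := root (@glue G).
have cls_arc v : darc (phi (cls (v, false))) (phi (cls (v, true))).
  by apply/hphi/existsP; exists v; rewrite !(glue_cs (cls _)) !connect_root.
exists (fun v => exist _ (phi (cls (v, false)), phi (cls (v, true))) (cls_arc v)).
move=> u v uv /=; suff -> : cls (u, true) = cls (v, false) by [].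
exact/(rootP glue_cs)/connect1.
Qed.

(* A map psi from T to the ends of S sending arcs to linked pairs, together
   with S -> delta H, yields T -> H: an end of s is sent to the corresponding
   end of the arc of H assigned to s. *)
Lemma linked_pullback (S H T : digraph) (psi : dvert T -> dvert S * bool) :
  hom S (arc_graph H) -> (forall x y, darc x y -> linked (psi x) (psi y)) ->
  hom T H.
Proof.
case=> phi hphi psi_linked.
pose vert_of (p : dvert S * bool) := if p.2 then (val (phi p.1)).2 else (val (phi p.1)).1.
have vert_glue p q : connect (@glue S) p q -> vert_of p = vert_of q.
  apply: connect_inv => -[a [|]] [b [|]] //= ab.
    exact/eqP/(hphi a b ab).
  exact/esym/eqP/(hphi b a ab).
exists (fun x => vert_of (psi x)) => x y /psi_linked /existsP[s /andP[xs ys]].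
by rewrite (vert_glue _ _ xs) (vert_glue _ _ ys); apply: (valP (phi s)).
Qed.

Definition point : digraph := @Digraph unit (fun _ _ => false).

Lemma point_tree : oriented_tree point.
Proof.
split => //.
- by rewrite card_unit.
- by move=> [] []; apply: connect0.
- by move=> [|[] [|[] c]].
Qed.

Definition addleaf (S : digraph) (s0 : dvert S) (out : bool) : digraph :=
  @Digraph (option (dvert S)) (fun a b => match a, b with
    | Some u, Some v => darc u v
    | Some u, None => out && (u == s0)
    | None, Some v => ~~ out && (v == s0)
    | None, None => false end).

Section AddLeaf.
Variables (S : digraph) (s0 : dvert S) (out : bool).
Let S1 := addleaf s0 out.

Lemma uadj_leaf (u : dvert S) : @uadj S1 (Some u) None = (u == s0).
Proof. by rewrite /uadj /=; case: out; rewrite ?andbF ?orbF. Qed.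

Lemma addleaf_connected :
  (forall u v : dvert S, connect (@uadj S) u v) ->
  forall a b : dvert S1, connect (@uadj S1) a b.
Proof.
move=> conn.
have some_conn u v : connect (@uadj S1) (Some u) (Some v).
  exact: (connect_homo (f := Some) _ (conn u v)).
have leaf_conn u : connect (@uadj S1) None (Some u).
  by apply: connect_trans (some_conn s0 u); rewrite connect1 // uadj_sym uadj_leaf.
have sym := sym_connect_sym (@uadj_sym S1).
move=> [u|] [v|]; [exact: some_conn | by rewrite sym | exact: leaf_conn | exact: connect0].
Qed.

(* The new leaf has a single neighbour, so it lies on no cycle. *)
Lemma leaf_on_no_cycle (c : seq (dvert S1)) :
  3 <= size c -> ucycleb (@uadj S1) c -> None \notin c.
Proof.
move=> size_c /andP[cyc_c uniq_c]; apply/negP => /rot_to[i s' rot_c].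
move: (rot_cycle i (@uadj S1) c) (rot_uniq i c).
rewrite -(size_rot i) rot_c cyc_c uniq_c in size_c *.
case: s' size_c {rot_c} => [|a [|b t]] //= _ /and3P[leaf_a _].
rewrite rcons_path => /andP[_ last_leaf] /and4P[leaf_notin a_notin _ _].
have last_in := mem_last b t.
case: a leaf_a a_notin leaf_notin => [a|] //; rewrite uadj_sym uadj_leaf.
move=> /eqP a_s0 a_notin; rewrite inE negb_or => /andP[_].
case: (last b t) last_in last_leaf => [z|] z_in; last by rewrite z_in.
by rewrite uadj_leaf => /eqP z_s0; move: a_notin; rewrite a_s0 -z_s0 z_in.
Qed.

Lemma addleaf_tree : oriented_tree S -> oriented_tree S1.
Proof.
case=> loopless antisym nonempty conn acyclic; split.
- by move=> [u|] //=; apply: loopless.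
- by move=> [u|] [v|] //=; case: out; rewrite /= ?andbF.
- by rewrite card_option.
- exact: addleaf_connected.
move=> c size_c; apply/negP => ucyc_c.
have /eqP c_some : c == map Some (pmap id c).
  have := leaf_on_no_cycle size_c ucyc_c.
  elim: c {size_c ucyc_c} => //= -[y|] c IH; rewrite inE ?eqxx //=.
  by move/IH; rewrite eqseq_cons eqxx.
move: size_c ucyc_c; rewrite c_some size_map /ucycleb cycle_map.
rewrite (map_inj_uniq (@Some_inj _)) => size_c ucyc_c.
by have /negP := acyclic _ size_c; apply.
Qed.
End AddLeaf.

Section LevelledTrees.
Variables (G : digraph) (m : nat).

Record ltree := LTree {
  lt_graph :> digraph;
  lt_map : dvert lt_graph -> dvert G;
  lt_lvl : dvert lt_graph -> nat;
  lt_tree : oriented_tree lt_graph;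
  lt_hom : homf lt_map;
  lt_lvlS : forall s t, darc s t -> lt_lvl t = (lt_lvl s).+1;
  lt_lvl_le : forall s, lt_lvl s <= m }.

Definition lt_end (S : ltree) (p : dvert S * bool) := (lt_map p.1, p.2).

Definition plvl (S : ltree) (p : dvert S * bool) := lt_lvl p.1 + p.2.

Lemma plvl_glue (S : ltree) p q : connect (@glue S) p q -> plvl p = plvl q.
Proof. exact: (glue_level (@lt_lvlS S)). Qed.

Lemma ltree_height (S : ltree) k : m <= k -> alg_height_le S k.
Proof.
by move=> le_mk; exists m; split=> //; apply/hom_dipathP; exists (@lt_lvl S);
  split; [apply: lt_lvlS | apply: lt_lvl_le].
Qed.

Definition ltree_point (v : dvert G) (l : nat) (le_lm : l <= m) : ltree :=
  @LTree point (fun=> v) (fun=> l) point_tree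
    (fun _ _ st => False_ind _ (notF st)) (fun _ _ st => False_ind _ (notF st))
    (fun=> le_lm).

Definition lt_embedding (S S' : ltree) (e : dvert S -> dvert S') : Prop :=
  [/\ homf e, forall s, lt_map (e s) = lt_map s & forall s, lt_lvl (e s) = lt_lvl s].

Lemma lt_embedding_comp (S1 S2 S3 : ltree) e1 e2 :
  @lt_embedding S1 S2 e1 -> @lt_embedding S2 S3 e2 ->
  lt_embedding (fun s => e2 (e1 s)).
Proof.
case=> hom1 map1 lvl1 [hom2 map2 lvl2]; split=> [u v /hom1 /hom2 //|s|s].
  by rewrite map2 map1.
by rewrite lvl2 lvl1.
Qed.

(* One gluing step of G can be copied into S by attaching a leaf, provided the
   level of the end stays within 1..m (so that the new leaf has a level). *)
Lemma ltree_add_end (S : ltree) (p : dvert S * bool) (q : dvert G * bool) :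
  0 < plvl p <= m -> glue (lt_end p) q ->
  exists (S' : ltree) (e : dvert S -> dvert S') (s' : dvert S'),
    [/\ lt_embedding e, glue (e p.1, p.2) (s', q.2) & lt_map s' = q.1].
Proof.
case: p q => s0 fwd [w b]; rewrite /plvl /= => /andP[lvl_gt0 lvl_le] glue_w.
have b_fwd : b = ~~ fwd by move: glue_w; rewrite /glue /=; case: (fwd); case: b.
rewrite {}b_fwd in glue_w *.
have {}glue_w : if fwd then darc (lt_map s0) w else darc w (lt_map s0).
  by move: glue_w; rewrite /glue /=; case: (fwd).
pose S1 := addleaf s0 fwd.
pose map1 (o : dvert S1) := if o is Some s then lt_map s else w.
pose lvl1 (o : dvert S1) :=
  if o is Some s then lt_lvl s else if fwd then (lt_lvl s0).+1 else (lt_lvl s0).-1.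
have hom1 : homf map1.
  move=> [u|] [v|] //=; [exact: lt_hom | |];
    by case: (fwd) glue_w => //= arc /eqP ->.
have lvlS1 u v : darc u v -> lvl1 v = (lvl1 u).+1.
  case: u v => [u|] [v|] //=; first exact: lt_lvlS.
    by case: (fwd) => //= /eqP ->.
  by case: (fwd) lvl_gt0 => //= lvl_gt0 /eqP ->; rewrite prednK // -(addn0 (lt_lvl _)).
have lvl1_le u : lvl1 u <= m.
  case: u => [u|] /=; first exact: lt_lvl_le.
  case: (fwd) lvl_le; rewrite /= ?addn1 // => _.
  exact: leq_trans (leq_pred _) (lt_lvl_le _).
have tree1 := addleaf_tree s0 fwd (lt_tree S).
exists (@LTree S1 map1 lvl1 tree1 hom1 lvlS1 lvl1_le), Some, None.
split=> //=; first by split.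
by rewrite /glue /=; case: (fwd); rewrite /= eqxx.
Qed.

Lemma ltree_realize (S : ltree) (p : dvert S * bool) (q : dvert G * bool) :
  0 < plvl p <= m -> connect (@glue _) (lt_end p) q ->
  exists (S' : ltree) (e : dvert S -> dvert S') (s' : dvert S'),
    [/\ lt_embedding e, connect (@glue _) (e p.1, p.2) (s', q.2) & lt_map s' = q.1].
Proof.
move=> lvl_p /connectP[r]; elim: r S p lvl_p => [|q1 r IH] S p lvl_p /=.
  by move=> _ ->; exists S, id, p.1; split=> //; split.
case/andP=> glue_q1 path_r last_q.
have [S1 [e1 [s1 [emb1 glue1 map1]]]] := ltree_add_end lvl_p glue_q1.
have lvl_s1 : 0 < plvl (s1, q1.2) <= m.
  case: emb1 => _ _ lvl_e1; rewrite -(plvl_glue (connect1 glue1)) /plvl /=.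
  by rewrite lvl_e1.
have lt_end_s1 : lt_end (s1, q1.2) = q1 by rewrite /lt_end /= map1 -surjective_pairing.
have := IH S1 (s1, q1.2) lvl_s1; rewrite lt_end_s1.
case/(_ path_r last_q) => S' [e2 [s' [emb2 conn2 map2]]].
exists S', (fun s => e2 (e1 s)), s'; split=> //; first exact: lt_embedding_comp emb1 emb2.
apply: connect_trans conn2; case: emb2 => hom2 _ _.
exact: (glue_homo hom2 (connect1 glue1)).
Qed.
End LevelledTrees.

Lemma path_exits (A : finType) (e : rel A) (X : {set A}) a p :
  path e a p -> a \in X -> last a p \notin X ->
  exists x w, [/\ x \in X, w \notin X & e x w].
Proof.
elim: p a => [|b p IH] a /=; first by move=> _ ->.
case/andP=> ab path_p aX; have [bX|bX] := boolP (b \in X); first exact: IH.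
by move=> _; exists a, b.
Qed.

Lemma proper_set_out (A : finType) (X : {set A}) : #|X| < #|A| -> exists y, y \notin X.
Proof.
move=> lt_X; apply/existsP; apply: contraTT lt_X; rewrite negb_exists -leqNgt.
by move=> /forallP all_in; rewrite -cardsT subset_leq_card //; apply/subsetP => z _; apply/negbNE.
Qed.

Section Growth.
Variable T : digraph.
Implicit Types (X : {set dvert T}) (r u w x : dvert T).

Definition adj_in X : rel (dvert T) := fun a b => [&& a \in X, b \in X & uadj a b].

Definition connected_from r X : Prop := forall u, u \in X -> connect (adj_in X) r u.

Lemma adj_in_sym X : symmetric (adj_in X).
Proof. by move=> a b; rewrite /adj_in uadj_sym andbCA. Qed.

Lemma path_adj_in X a q : path (adj_in X) a q -> {subset q <= X}.
Proof.
elim: q a => //= b q IH a /andP[/and3P[_ bX _] /IH q_X] c.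
by rewrite inE => /predU1P[->|/q_X].
Qed.

Lemma connected_fromU1 r X x w :
  connected_from r X -> x \in X -> uadj x w -> connected_from r (w |: X).
Proof.
move=> conn_X xX xw u; have sub : subrel (adj_in X) (connect (adj_in (w |: X))).
  by move=> a b /and3P[aX bX ab]; apply: connect1; rewrite /adj_in !inE aX bX ab !orbT.
case/setU1P=> [->|/conn_X]; last exact: connect_sub.
apply: connect_trans (connect_sub sub (conn_X x xX)) (connect1 _).
by rewrite /adj_in !inE xX eqxx xw orbT.
Qed.

Lemma connected_induction (P : {set dvert T} -> Prop) r :
  (forall u v, connect (@uadj T) u v) -> P [set r] ->
  (forall X x w, connected_from r X -> x \in X -> w \notin X -> uadj x w ->
     P X -> P (w |: X)) ->
  P [set: dvert T].
Proof.
move=> conn P_r P_step.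
have grow m : m < #|dvert T| -> exists X,
    [/\ #|X| = m.+1, r \in X, connected_from r X & P X].
  elim: m => [_|m IH lt_mT].
    exists [set r]; split=> //; rewrite ?cards1 ?set11 // => u /set1P ->.
    exact: connect0.
  have [X [card_X rX conn_X PX]] := IH (ltnW lt_mT).
  have [y yX] := proper_set_out (leq_ltn_trans (eq_leq card_X) lt_mT).
  have [p path_p y_last] := connectP (conn r y).
  rewrite y_last in yX; have [x [w [xX wX xw]]] := path_exits path_p rX yX.
  exists (w |: X); split; last exact: P_step conn_X xX wX xw PX.
  - by rewrite cardsU1 wX card_X.
  - by rewrite setU1r.
  - exact: connected_fromU1 conn_X xX xw.
have T_pos : 0 < #|dvert T| by apply/card_gt0P; exists r.
have [|X [card_X _ _ PX]] := grow #|dvert T|.-1; first by rewrite ltn_predL.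
suff <- : X = [set: dvert T] by [].
by apply/eqP; rewrite eqEcard subsetT cardsT card_X prednK //= leqnn.
Qed.

(* In an oriented tree, a vertex outside a connected set X has at most one
   neighbour in X: two would close a cycle through X. *)
Lemma tree_unique_nbr r X x x' w : oriented_tree T -> connected_from r X ->
  x \in X -> x' \in X -> w \notin X -> uadj x w -> uadj x' w -> x' = x.
Proof.
case=> _ _ _ _ acyclic conn_X xX x'X wX xw x'w; apply/eqP/negP => /negP x'x.
have conn_xx' : connect (adj_in X) x x'.
  apply: connect_trans (conn_X x' x'X).
  by rewrite (sym_connect_sym (@adj_in_sym X)); apply: conn_X.
case/connectP: conn_xx' x'X x'w x'x => p /shortenP[[|z p'] path_p' uniq_p' _] ->.
  by rewrite eqxx.
move=> _ last_w _; have /negP := acyclic [:: w, x, z & p'] isT; apply.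
have path_u : path (@uadj T) x (z :: p') by apply: sub_path path_p' => a b /and3P[].
have w_out : w \notin x :: z :: p'.
  by apply: contra wX; rewrite inE => /predU1P[->|/(path_adj_in path_p')].
rewrite /ucycleb /= rcons_path uadj_sym xw last_w w_out /=.
by move: path_u uniq_p' => /= /andP[-> ->] /and3P[-> -> ->].
Qed.
End Growth.

Section Unfolding.
Variables (G T : digraph) (n : nat) (h : dvert T -> nat) (g : dvert T -> dvert G * bool).
Hypothesis T_tree : oriented_tree T.
Hypothesis h_arc : forall a b, darc a b -> h b = (h a).+1.
Hypothesis h_le : forall a, h a <= n.
Hypothesis g_linked : forall a b, darc a b -> linked (g a) (g b).

Definition unfolding (X : {set dvert T}) (S : ltree G n.+1)
    (psi : dvert T -> dvert S * bool) : Prop :=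
  [/\ forall x, x \in X -> connect (@glue G) (lt_end (psi x)) (g x),
      forall x, x \in X -> plvl (psi x) = (h x).+1 &
      forall x y, x \in X -> y \in X -> darc x y -> linked (psi x) (psi y)].

Definition unfolds (X : {set dvert T}) : Prop :=
  exists (S : ltree G n.+1) (psi : dvert T -> dvert S * bool), unfolding X psi.

Lemma unfolding_embed X (S S' : ltree G n.+1) psi (e : dvert S -> dvert S') :
  lt_embedding e -> unfolding X psi ->
  unfolding X (fun z => (e (psi z).1, (psi z).2)).
Proof.
case=> hom_e map_e lvl_e [glue_X lvl_X link_X]; split=> [x xX|x xX|x y xX yX xy].
- by rewrite /lt_end /= map_e; apply: glue_X.
- by rewrite /plvl /= lvl_e; apply: lvl_X.
- exact/linked_homo/link_X.
Qed.

Lemma unfolds1 r : unfolds [set r].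
Proof.
have lvl_r : (h r).+1 - (g r).2 <= n.+1 by rewrite (leq_trans (leq_subr _ _)) ?ltnS.
exists (ltree_point (g r).1 lvl_r), (fun=> (tt, (g r).2)).
split=> [x /set1P->|x /set1P->|x y /set1P-> /set1P->].
- by rewrite /lt_end /= -surjective_pairing connect0.
- by rewrite /plvl /= subnK // (leq_trans (leq_b1 _)).
- by case: T_tree => /(_ r) /negP.
Qed.

Lemma edge_witness x w : uadj x w -> exists2 v,
  connect (@glue G) (g x) (v, darc w x) & connect (@glue G) (g w) (v, ~~ darc w x).
Proof.
case/orP=> [xw|wx]; last first.
  by have /existsP[v /andP[wv xv]] := g_linked wx; exists v; rewrite wx.
have wx : darc w x = false.
  have : ~~ (darc x w && darc w x) by case: T_tree.
  by rewrite xw => /negbTE.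
by have /existsP[v /andP[xv wv]] := g_linked xw; exists v; rewrite wx.
Qed.

Lemma flip_level (S : ltree G n.+1) (s : dvert S) x w : uadj x w ->
  plvl (s, darc w x) = (h x).+1 -> plvl (s, ~~ darc w x) = (h w).+1.
Proof.
rewrite /plvl /=; case wx: (darc w x) => /= xw.
  by rewrite (h_arc wx) addn1 addn0 => -[].
by rewrite /uadj wx orbF in xw; rewrite (h_arc xw) addn0 addn1 => ->.
Qed.

(* The unfolding of a connected set extends to one more neighbour w of x:
   the zigzag path from psi x to the end of v given by [edge_witness] is
   copied into S, and w goes to the opposite end of the copy of v. *)
Lemma unfoldsU1 r X x w : connected_from r X -> x \in X -> w \notin X -> uadj x w ->
  unfolds X -> unfolds (w |: X).
Proof.
move=> conn_X xX wX xw [S [psi unf_X]]; have [glue_X lvl_X _] := unf_X.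
have [v gx_v gw_v] := edge_witness xw; set c := darc w x in gx_v gw_v.
have lvl_x : 0 < plvl (psi x) <= n.+1 by rewrite lvl_X //=; apply: h_le.
have [S' [e [s' [emb_e conn_s' map_s']]]] :=
  ltree_realize lvl_x (connect_trans (glue_X x xX) gx_v).
have [glue_X' lvl_X' link_X'] := unfolding_embed emb_e unf_X.
set psi' := fun z => (e (psi z).1, (psi z).2) in glue_X' lvl_X' link_X' conn_s'.
have lvl_s' : plvl (s', c) = (h x).+1 by rewrite -(plvl_glue conn_s') lvl_X'.
have nbr_x y : y \in X -> uadj y w -> y = x.
  by move=> yX; apply: tree_unique_nbr conn_X xX yX wX xw.
have out_X y : y \in X -> (y == w) = false.
  by move=> yX; apply/negbTE; apply: contraNneq wX => <-.
exists S', (fun z => if z == w then (s', ~~ c) else psi' z).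
split=> [z|z|a b]; rewrite !inE.
- case: eqP => [-> _|_ /= zX]; last exact: glue_X'.
  by rewrite /lt_end /= map_s' (sym_connect_sym (@glue_sym G)).
- case: eqP => [-> _|_ /= zX]; last exact: lvl_X'.
  exact: flip_level xw lvl_s'.
case/predU1P=> [->|aX] /predU1P[->|bX] ab; rewrite ?eqxx ?out_X //.
- by case: T_tree => /(_ w) /negP.
- have bx := nbr_x b bX (introT orP (or_intror ab)); subst b.
  by apply/existsP; exists s'; move: conn_s'; rewrite /c ab /= connect0 => ->.
- have ax := nbr_x a aX (introT orP (or_introl ab)); subst a.
  have c_false : c = false.
    have : ~~ (darc x w && darc w x) by case: T_tree.
    by rewrite ab => /negbTE.
  by apply/existsP; exists s'; move: conn_s'; rewrite c_false /= connect0 andbT.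
- exact: link_X'.
Qed.

Lemma tree_unfolding : exists (S : ltree G n.+1) (psi : dvert T -> dvert S * bool),
  forall x y, darc x y -> linked (psi x) (psi y).
Proof.
case: (T_tree) => _ _ /card_gt0P[r _] conn _.
have [S [psi [_ _ link]]] := connected_induction conn (unfolds1 r) (@unfoldsU1 r).
by exists S, psi => x y; apply: link; rewrite inE.
Qed.
End Unfolding.

Theorem mainTheorem5 (k : nat) (H : digraph) :
  (exists F : digraph -> Prop,
      (forall T, F T -> oriented_tree T /\ alg_height_le T k) /\
      obstruction_set F H) ->
  exists F' : digraph -> Prop,
    (forall T, F' T -> oriented_tree T /\ alg_height_le T k.+1) /\
    obstruction_set F' (arc_graph H).
Proof.
case=> F [F_trees F_obs].
exists (fun S => [/\ oriented_tree S, alg_height_le S k.+1 & ~ hom S (arc_graph H)]).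
split=> [S [] //|G]; split.
  by move=> GH [S [[_ _ not_SH] SG]]; apply/not_SH/(hom_trans SG GH).
move=> no_obs; apply: NNPP => not_GH.
have [T [FT TG]] : exists T, F T /\ hom T (delta_adj G).
  apply: NNPP => no_T; apply/not_GH/hom_delta_adj/(F_obs (delta_adj G)).
  by move=> [T [FT TG]]; apply: no_T; exists T.
have [T_tree [n [le_nk /hom_dipathP[h [h_arc h_le]]]]] := F_trees T FT.
case: TG => g g_linked.
have [S [psi link]] := tree_unfolding T_tree h_arc h_le g_linked.
apply: no_obs; exists S; split; last by exists (@lt_map _ _ S); apply: lt_hom.
split; [exact: lt_tree | exact: ltree_height | move=> SH].
have TH := linked_pullback SH link.
by apply: (proj1 (F_obs T) TH); exists T; split=> //; exists id.
Qed.
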